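(* Let $G=(V\cup C,E)$ be a protograph in which every variable node has degree at least $2$, and assume that (1) the degree-2 subgraph $G_2$ contains no cycle, and (2) every degree-2 variable node is joined by a path in $G$ to a variable node of degree at least $3$. Let $\epsilon_{\mathrm{th}}$ be the BEC density evolution threshold of $G$. Then for every $\epsilon$ with $0\le\epsilon<\epsilon_{\mathrm{th}}$ there exist positive constants $\alpha,\beta,K$ and an integer $t_0$ such that $$x_t(i)\le K\exp\!\left(-\beta\, 2^{\alpha t}\right)\qquad\text{for all } 1\le i\le |E| \text{ and all } t\ge t_0 .$$
   Context: A protograph is a finite bipartite multigraph $G=(V\cup C,E)$ with variable (bit) nodes $V$, check nodes $C$, and ordered edges $E=\{e_1,\dots,e_{|E|}\}$; parallel edges between a variable node and a check node are allowed. For an edge $e$, $v(e)$ and $c(e)$ denote its variable-node and check-node endpoints. The degree of a node is the number of incident edges counted with multiplicity. For an edge $e$, $E_c(e)=\{i: c(e_i)=c(e),\ e_i\neq e\}$ and $E_v(e)=\{i: v(e_i)=v(e),\ e_i\ne e\}$. The degree-2 subgraph $G_2$ of $G$ consists of all degree-2 variable nodes, all edges incident to them, and the check nodes incident to those edges; a cycle in $G_2$ may have length $2$ (two parallel edges between the same variable and check node). Protograph density evolution over the binary erasure channel BEC$(\epsilon)$, $\epsilon\in[0,1]$: $x_0(i)=\epsilon$ for all $i$, and for $t\ge 0$, $y_{t+1}(j)=1-\prod_{i\in E_c(e_j)}(1-x_t(i))$, $x_{t+1}(i)=\epsilon\prod_{j\in E_v(e_i)}y_{t+1}(j)$ (empty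 products equal $1$). The threshold is $\epsilon_{\mathrm{th}}=\sup\{\epsilon\in[0,1]: \max_i x_t(i)\to 0 \text{ as } t\to\infty\}$. *)

From Stdlib Require Import Reals Lra Lia Arith List Bool.
Import ListNotations.
Open Scope R_scope.

(* A protograph: variable nodes 0..nv-1, check nodes 0..nc-1, and an ordered
   list of edges; edge i (0 <= i < |E|) is the pair (v(e_i), c(e_i)).
   Parallel edges are allowed (repeated pairs). *)
Record protograph := {
  nvar : nat;
  nchk : nat;
  edges : list (nat * nat)
}.

Definition nedges (G : protograph) : nat := length (edges G).
Definition edge (G : protograph) (i : nat) : nat * nat := nth i (edges G) (0%nat, 0%nat).
Definition vof (G : protograph) (i : nat) : nat := fst (edge G i).
Definition cof (G : protograph) (i : nat) : nat := snd (edge G i).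

Definition well_formed (G : protograph) : Prop :=
  forall i, (i < nedges G)%nat -> (vof G i < nvar G)%nat /\ (cof G i < nchk G)%nat.

Definition var_deg (G : protograph) (v : nat) : nat :=
  length (filter (fun i => Nat.eqb (vof G i) v) (seq 0 (nedges G))).

Definition Ec (G : protograph) (j : nat) : list nat :=
  filter (fun i => andb (Nat.eqb (cof G i) (cof G j)) (negb (Nat.eqb i j))) (seq 0 (nedges G)).
Definition Ev (G : protograph) (j : nat) : list nat :=
  filter (fun i => andb (Nat.eqb (vof G i) (vof G j)) (negb (Nat.eqb i j))) (seq 0 (nedges G)).

Definition prodR (f : nat -> R) (l : list nat) : R :=
  fold_right (fun i acc => f i * acc) 1 l.

(* y_{t+1}(j) computed from x_t *)
Definition de_y (G : protograph) (xt : nat -> R) (j : nat) : R :=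
  1 - prodR (fun i => 1 - xt i) (Ec G j).

Fixpoint de_x (G : protograph) (eps : R) (t : nat) : nat -> R :=
  match t with
  | O => fun _ => eps
  | S t' => fun i => eps * prodR (de_y G (de_x G eps t')) (Ev G i)
  end.

Definition de_converges (G : protograph) (eps : R) : Prop :=
  0 <= eps <= 1 /\
  forall i, (i < nedges G)%nat -> Un_cv (fun t => de_x G eps t i) 0.

Definition is_threshold (G : protograph) (eth : R) : Prop :=
  is_lub (de_converges G) eth.

Inductive node := VN (v : nat) | CN (c : nat).

Definition connects (G : protograph) (i : nat) (u u' : node) : Prop :=
  (u = VN (vof G i) /\ u' = CN (cof G i)) \/ (u = CN (cof G i) /\ u' = VN (vof G i)).

(* A cycle: k >= 2 distinct edges e_0..e_{k-1} and k distinct vertices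
   u_0..u_{k-1} with e_j joining u_j and u_{(j+1) mod k}.  (k = 2 covers two
   parallel edges.)  It lies in G_2 iff all its edges are incident to
   degree-2 variable nodes. *)
Definition has_cycle_in_G2 (G : protograph) : Prop :=
  exists (k : nat) (es : list nat) (us : list node),
    (2 <= k)%nat /\ length es = k /\ length us = k /\ NoDup es /\ NoDup us /\
    (forall j, (j < k)%nat ->
       (nth j es 0 < nedges G)%nat /\
       var_deg G (vof G (nth j es 0%nat)) = 2%nat /\
       connects G (nth j es 0%nat) (nth j us (VN 0)) (nth ((j + 1) mod k) us (VN 0))).

Definition path_in_G (G : protograph) (a b : node) : Prop :=
  exists (k : nat) (es : list nat) (us : list node),
    length es = k /\ length us = S k /\ NoDup us /\
    nth 0 us (VN 0) = a /\ nth k us (VN 0) = b /\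
    (forall j, (j < k)%nat ->
       (nth j es 0 < nedges G)%nat /\
       connects G (nth j es 0%nat) (nth j us (VN 0)) (nth (S j) us (VN 0))).

From Stdlib Require Import Reals Lra Lia Arith List Bool Classical.
Import ListNotations.
Open Scope R_scope.

(* Below the threshold every message eventually drops below any fixed level.
   Once all x_t(k) are at most d, one density evolution step at a variable node
   of degree >= 3 multiplies two check messages, each bounded by |E| d, so it
   squares the bound up to a constant.  A message on a degree-2 variable node is
   bounded by the messages on the edges behind its partner edge; following these
   edges through degree-2 nodes traces a non-backtracking walk in G_2, and since
   G_2 has no cycle such a walk passes at most [nchk G] check nodes before it
   reaches a node of degree >= 3.  Hence every [nchk G + 1] iterations the bound
   is squared (up to a constant), which gives the doubly exponential decay. *)

Definition injective_below {A : Type} (f : nat -> A) (n : nat) : Prop :=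
  forall p q, (p < n)%nat -> (q < n)%nat -> f p = f q -> p = q.

Lemma NoDup_map_seq {A : Type} (f : nat -> A) (n : nat) :
  injective_below f n -> NoDup (map f (seq 0 n)).
Proof.
  intros Hf. induction n as [|n IH]; [constructor|].
  rewrite seq_S, map_app. apply NoDup_app; simpl.
  - apply IH. intros p q Hp Hq. apply Hf; lia.
  - repeat constructor. intros [].
  - intros x Hx [Hn|[]]. apply in_map_iff in Hx as [p [Hp Hin]].
    apply in_seq in Hin. rewrite <- Hn in Hp.
    specialize (Hf p n ltac:(lia) ltac:(lia) Hp). lia.
Qed.

Lemma injective_below_bounded (f : nat -> nat) (n k : nat) :
  injective_below f n -> (forall p, (p < n)%nat -> (f p < k)%nat) -> (n <= k)%nat.
Proof.
  intros Hf Hk.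
  assert (Hincl : incl (map f (seq 0 n)) (seq 0 k)).
  { intros x Hx. apply in_map_iff in Hx as [p [<- Hp]].
    apply in_seq in Hp. apply in_seq. specialize (Hk p). lia. }
  pose proof (NoDup_incl_length (NoDup_map_seq f n Hf) Hincl) as Hlen.
  rewrite length_map, !length_seq in Hlen. exact Hlen.
Qed.

Lemma injective_below_or_first_repeat (f : nat -> nat) (n : nat) :
  injective_below f n \/
  exists a b, (a < b < n)%nat /\ f a = f b /\ injective_below f b.
Proof.
  induction n as [|n [Hinj|Hrep]].
  - left. intros p q Hp. lia.
  - destruct (in_dec Nat.eq_dec (f n) (map f (seq 0 n))) as [Hin|Hnin].
    + right. apply in_map_iff in Hin as [a [Ha Hin]]. apply in_seq in Hin.
      exists a, n. repeat split; auto; lia.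
    + left. intros p q Hp Hq Hpq.
      assert (Hfresh : forall r, (r < n)%nat -> f r <> f n).
      { intros r Hr Hrn. apply Hnin. rewrite <- Hrn. apply in_map, in_seq. lia. }
      destruct (Nat.eq_dec p n) as [->|Hpn]; destruct (Nat.eq_dec q n) as [->|Hqn];
        auto; [destruct (Hfresh q) | destruct (Hfresh p) | apply Hinj]; auto; lia.
  - right. destruct Hrep as [a [b [Hab Hrep]]]. exists a, b. split; [lia | exact Hrep].
Qed.

Lemma length_filter_remove (p : nat -> bool) (i : nat) (l : list nat) :
  NoDup l -> In i l -> p i = true ->
  length (filter p l) = S (length (filter (fun k => p k && negb (Nat.eqb k i)) l)).
Proof.
  induction l as [|x l IH]; intros Hnd Hin Hp; [destruct Hin|].
  inversion Hnd as [|? ? Hx Hnd']; subst. simpl.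
  destruct (Nat.eqb_spec x i) as [->|Hne].
  - rewrite Hp. simpl. f_equal. f_equal. apply filter_ext_in.
    intros y Hy. destruct (Nat.eqb_spec y i); subst; [contradiction|].
    rewrite andb_true_r. reflexivity.
  - destruct Hin as [->|Hin]; [congruence|]. simpl.
    destruct (p x); simpl; rewrite IH; auto.
Qed.

Lemma In_Ev G i j : In j (Ev G i) <-> (j < nedges G /\ vof G j = vof G i /\ j <> i)%nat.
Proof.
  unfold Ev. rewrite filter_In, in_seq, andb_true_iff, negb_true_iff,
    Nat.eqb_eq, Nat.eqb_neq. lia.
Qed.

Lemma In_Ec G i j : In j (Ec G i) <-> (j < nedges G /\ cof G j = cof G i /\ j <> i)%nat.
Proof.
  unfold Ec. rewrite filter_In, in_seq, andb_true_iff, negb_true_iff,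
    Nat.eqb_eq, Nat.eqb_neq. lia.
Qed.

Lemma length_Ev G i : (i < nedges G)%nat -> length (Ev G i) = (var_deg G (vof G i) - 1)%nat.
Proof.
  intros Hi. unfold var_deg.
  rewrite (length_filter_remove (fun k => Nat.eqb (vof G k) (vof G i)) i).
  - unfold Ev. lia.
  - apply seq_NoDup.
  - apply in_seq. lia.
  - apply Nat.eqb_refl.
Qed.

Lemma length_Ec_le G j : (length (Ec G j) <= nedges G)%nat.
Proof. unfold Ec. rewrite <- (length_seq (nedges G) 0) at 2. apply filter_length_le. Qed.

Lemma prodR_01 f l : (forall i, In i l -> 0 <= f i <= 1) -> 0 <= prodR f l <= 1.
Proof.
  induction l as [|a l IH]; simpl; intros H; [lra|].
  destruct (H a (or_introl eq_refl)).
  destruct IH as [P0 P1]; [intros; apply H; auto|]. split; nra.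
Qed.

Lemma prodR_le f g l : (forall i, In i l -> 0 <= f i <= g i /\ g i <= 1) ->
  prodR f l <= prodR g l.
Proof.
  intros H. induction l as [|a l IH]; simpl; [lra|].
  destruct (H a (or_introl eq_refl)).
  assert (Hl : forall i, In i l -> 0 <= f i <= g i /\ g i <= 1) by (intros i Hi; apply H; right; exact Hi).
  destruct (prodR_01 f l) as [P0 _]; [intros i Hi; destruct (Hl i Hi); lra|].
  specialize (IH Hl).
  apply Rle_trans with (g a * prodR f l); [apply Rmult_le_compat_r|apply Rmult_le_compat_l]; lra.
Qed.

Lemma one_minus_prodR_le f l d : (forall i, In i l -> 0 <= f i <= d /\ f i <= 1) ->
  1 - prodR (fun i => 1 - f i) l <= INR (length l) * d.
Proof.
  induction l as [|a l IH]; simpl prodR; intros H; [simpl; lra|].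
  change (length (a :: l)) with (S (length l)). rewrite S_INR.
  destruct (H a (or_introl eq_refl)).
  destruct (prodR_01 (fun i => 1 - f i) l) as [P0 P1].
  { intros i Hi. destruct (H i (or_intror Hi)). lra. }
  assert (IH' := IH (fun i Hi => H i (or_intror Hi))). nra.
Qed.

Lemma prodR_le_sqr f l c : (2 <= length l)%nat ->
  (forall i, In i l -> 0 <= f i <= c /\ f i <= 1) -> prodR f l <= c * c.
Proof.
  intros Hl H. destruct l as [|a [|b l]]; simpl in Hl; try lia. simpl.
  destruct (prodR_01 f l) as [P0 P1].
  { intros i Hi. destruct (H i) as [? ?]; [simpl; auto | lra]. }
  destruct (H a) as [? ?]; [simpl; auto|]. destruct (H b) as [? ?]; [simpl; auto|].
  apply Rle_trans with (f a * f b); [|apply Rmult_le_compat; lra].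
  rewrite <- Rmult_assoc. rewrite <- (Rmult_1_r (f a * f b)) at 2.
  apply Rmult_le_compat_l; [apply Rmult_le_pos|]; lra.
Qed.

Lemma de_y_01 G xt j : (forall i, 0 <= xt i <= 1) -> 0 <= de_y G xt j <= 1.
Proof.
  intros H. unfold de_y.
  destruct (prodR_01 (fun i => 1 - xt i) (Ec G j)); [|lra].
  intros i _. specialize (H i). lra.
Qed.

Lemma de_y_le G xt j d : 0 <= d -> (forall k, In k (Ec G j) -> 0 <= xt k <= d /\ xt k <= 1) ->
  de_y G xt j <= INR (nedges G) * d.
Proof.
  intros Hd H. unfold de_y.
  eapply Rle_trans; [apply one_minus_prodR_le; exact H|].
  apply Rmult_le_compat_r; [exact Hd|]. apply le_INR, length_Ec_le.
Qed.

Lemma prodR_de_y_le G x1 x2 l : (forall i, 0 <= x1 i <= x2 i /\ x2 i <= 1) ->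
  prodR (de_y G x1) l <= prodR (de_y G x2) l.
Proof.
  intros H. apply prodR_le. intros j _.
  assert (H1 : forall i, 0 <= x1 i <= 1) by (intros i; specialize (H i); lra).
  assert (H2 : forall i, 0 <= x2 i <= 1) by (intros i; specialize (H i); lra).
  split; [split|]; [apply de_y_01; exact H1 | | apply de_y_01; exact H2].
  unfold de_y. enough (prodR (fun i => 1 - x2 i) (Ec G j) <= prodR (fun i => 1 - x1 i) (Ec G j))
    by lra.
  apply prodR_le. intros i _. specialize (H i). lra.
Qed.

Lemma de_x_S G eps t i : de_x G eps (S t) i = eps * prodR (de_y G (de_x G eps t)) (Ev G i).
Proof. reflexivity. Qed.

Lemma de_x_01 G eps : 0 <= eps <= 1 -> forall t i, 0 <= de_x G eps t i <= 1.
Proof.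
  intros He t. induction t as [|t IH]; intros i; [simpl; lra|].
  rewrite de_x_S.
  destruct (prodR_01 (de_y G (de_x G eps t)) (Ev G i)); [|nra].
  intros j _. apply de_y_01. exact IH.
Qed.

Lemma de_x_le_eps G e1 e2 : 0 <= e1 <= e2 -> e2 <= 1 ->
  forall t i, de_x G e1 t i <= de_x G e2 t i.
Proof.
  intros He He2 t. induction t as [|t IH]; intros i; [simpl; lra|].
  rewrite !de_x_S.
  destruct (prodR_01 (de_y G (de_x G e1 t)) (Ev G i)).
  { intros j _. apply de_y_01, de_x_01. lra. }
  apply Rmult_le_compat; [lra | lra | lra |].
  apply prodR_de_y_le. intros k.
  pose proof (de_x_01 G e1 ltac:(lra) t k). pose proof (de_x_01 G e2 ltac:(lra) t k).
  specialize (IH k). lra.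
Qed.

Lemma de_x_S_le G eps : 0 <= eps <= 1 -> forall t i, de_x G eps (S t) i <= de_x G eps t i.
Proof.
  intros He t. induction t as [|t IH]; intros i.
  - rewrite de_x_S. simpl.
    destruct (prodR_01 (de_y G (fun _ => eps)) (Ev G i)); [|nra].
    intros j _. apply de_y_01. intros; lra.
  - rewrite (de_x_S G eps (S t)), (de_x_S G eps t).
    apply Rmult_le_compat_l; [lra|]. apply prodR_de_y_le. intros k.
    pose proof (de_x_01 G eps He (S t) k). pose proof (de_x_01 G eps He t k).
    specialize (IH k). lra.
Qed.

Lemma de_x_antitone G eps t s i : 0 <= eps <= 1 -> (t <= s)%nat ->
  de_x G eps s i <= de_x G eps t i.
Proof.
  intros He H. induction H as [|s _ IH]; [lra|].
  pose proof (de_x_S_le G eps He s i). lra.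
Qed.

Definition deg2_edge G i : Prop := (i < nedges G)%nat /\ var_deg G (vof G i) = 2%nat.

Definition partner G i : nat := hd 0%nat (Ev G i).

Lemma Ev_deg2 G i : deg2_edge G i -> Ev G i = [partner G i].
Proof.
  intros [Hi Hd]. pose proof (length_Ev G i Hi) as L. rewrite Hd in L.
  unfold partner. destruct (Ev G i) as [|a [|b l]]; simpl in *; try lia. reflexivity.
Qed.

Lemma partner_spec G i : deg2_edge G i ->
  (partner G i < nedges G)%nat /\ vof G (partner G i) = vof G i /\ partner G i <> i.
Proof. intros Hi. apply In_Ev. rewrite (Ev_deg2 G i Hi). now left. Qed.

Lemma deg2_edge_partner G i : deg2_edge G i -> deg2_edge G (partner G i).
Proof.
  intros Hi. destruct (partner_spec G i Hi) as [Hp [Hv _]].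
  split; [exact Hp|]. rewrite Hv. apply Hi.
Qed.

Lemma deg2_edge_eq G i e : deg2_edge G i -> (e < nedges G)%nat -> vof G e = vof G i ->
  e = i \/ e = partner G i.
Proof.
  intros Hi He Hv. destruct (Nat.eq_dec e i) as [->|Hne]; [now left|]. right.
  assert (Hin : In e (Ev G i)) by (apply In_Ev; auto).
  rewrite (Ev_deg2 G i Hi) in Hin. destruct Hin as [<-|[]]. reflexivity.
Qed.

Lemma de_x_S_deg2 G eps t i : 0 <= eps <= 1 -> deg2_edge G i ->
  de_x G eps (S t) i <= de_y G (de_x G eps t) (partner G i).
Proof.
  intros He Hi. rewrite de_x_S, (Ev_deg2 G i Hi). simpl.
  pose proof (de_y_01 G (de_x G eps t) (partner G i) (de_x_01 G eps He t)). nra.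
Qed.

Lemma de_y_de_x_le G eps t j d : 0 <= eps <= 1 -> 0 <= d ->
  (forall k, In k (Ec G j) -> de_x G eps t k <= d) ->
  de_y G (de_x G eps t) j <= INR (nedges G) * d.
Proof.
  intros He Hd H. apply de_y_le; [exact Hd|].
  intros k Hk. pose proof (de_x_01 G eps He t k). specialize (H k Hk). lra.
Qed.

Lemma de_x_S_deg3 G eps t i d : 0 <= eps <= 1 -> 0 <= d -> (i < nedges G)%nat ->
  (3 <= var_deg G (vof G i))%nat ->
  (forall k, (k < nedges G)%nat -> de_x G eps t k <= d) ->
  de_x G eps (S t) i <= (INR (nedges G) * d) * (INR (nedges G) * d).
Proof.
  intros He Hd Hi H3 H. rewrite de_x_S.
  assert (Hprod : prodR (de_y G (de_x G eps t)) (Ev G i)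
                  <= (INR (nedges G) * d) * (INR (nedges G) * d)).
  { apply prodR_le_sqr; [rewrite length_Ev; lia|]. intros j _.
    pose proof (de_y_01 G (de_x G eps t) j (de_x_01 G eps He t)).
    enough (de_y G (de_x G eps t) j <= INR (nedges G) * d) by lra.
    apply de_y_de_x_le; auto. intros k Hk. apply H, (proj1 (In_Ec G j k) Hk). }
  destruct (prodR_01 (de_y G (de_x G eps t)) (Ev G i)); [|nra].
  intros j _. apply de_y_01, de_x_01, He.
Qed.

Definition interleave {A : Type} (f g : nat -> A) (p : nat) : A :=
  if Nat.even p then f (Nat.div2 p) else g (Nat.div2 p).

Lemma interleave_even {A : Type} (f g : nat -> A) q : interleave f g (2 * q) = f q.
Proof. unfold interleave. now rewrite Nat.even_even, Nat.div2_double. Qed.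

Lemma interleave_odd {A : Type} (f g : nat -> A) q : interleave f g (2 * q + 1) = g q.
Proof. unfold interleave. now rewrite Nat.even_odd, Nat.div2_odd'. Qed.

Lemma even_or_odd_below p n : (p < 2 * n)%nat ->
  (exists q, p = 2 * q /\ q < n)%nat \/ (exists q, p = 2 * q + 1 /\ q < n)%nat.
Proof.
  intros Hp. destruct (Nat.Even_or_Odd p) as [[q Hq]|[q Hq]];
    [left | right]; exists q; lia.
Qed.

Lemma injective_below_interleave {A : Type} (f g : nat -> A) n :
  injective_below f n -> injective_below g n ->
  (forall q q', (q < n)%nat -> (q' < n)%nat -> f q <> g q') ->
  injective_below (interleave f g) (2 * n).
Proof.
  intros Hf Hg Hfg p p' Hp Hp'.
  destruct (even_or_odd_below p n Hp) as [[q [-> Hq]]|[q [-> Hq]]];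
  destruct (even_or_odd_below p' n Hp') as [[q' [-> Hq']]|[q' [-> Hq']]];
  rewrite ?interleave_even, ?interleave_odd; intros E.
  - rewrite (Hf q q'); auto.
  - destruct (Hfg q q'); auto.
  - destruct (Hfg q' q); auto.
  - rewrite (Hg q q'); auto.
Qed.

Lemma nth_map_seq {A : Type} (f : nat -> A) n j d : (j < n)%nat -> nth j (map f (seq 0 n)) d = f j.
Proof.
  intros H. rewrite (nth_indep _ d (f 0%nat)) by (rewrite length_map, length_seq; lia).
  rewrite map_nth, seq_nth by lia. reflexivity.
Qed.

(* A walk in G_2 that enters the variable node of [w m] along [w m], leaves it
   along its partner edge, and continues from that check node along a different
   edge [w (S m)]. *)
Definition deg2_walk G (w : nat -> nat) (r : nat) : Prop :=
  (forall m, (m <= r)%nat -> deg2_edge G (w m)) /\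
  (forall m, (m < r)%nat ->
     cof G (w (S m)) = cof G (partner G (w m)) /\ w (S m) <> partner G (w m)).

Lemma deg2_walk_le G w r s : (s <= r)%nat -> deg2_walk G w r -> deg2_walk G w s.
Proof. intros Hs [Hw Hstep]. split; intros m Hm; [apply Hw | apply Hstep]; lia. Qed.

Lemma deg2_walk_cons G i k w r : deg2_edge G i ->
  cof G k = cof G (partner G i) -> k <> partner G i ->
  w 0%nat = k -> deg2_walk G w r ->
  deg2_walk G (fun m => match m with O => i | S m' => w m' end) (S r).
Proof.
  intros Hi Hc Hne H0 [Hw Hstep]. split.
  - intros [|m] Hm; [exact Hi | apply Hw; lia].
  - intros [|m] Hm; [rewrite H0; auto | apply Hstep; lia].
Qed.

Section Deg2WalkCycle.

Variables (G : protograph) (w : nat -> nat) (a b : nat).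
Hypothesis Hab : (a < b)%nat.
Hypothesis Hwalk : deg2_walk G w b.
Hypothesis Hrep : cof G (w a) = cof G (w b).
Hypothesis Hinj : injective_below (fun m => cof G (w m)) b.

Let J m := partner G (w m).

Let walk_edge m : (m <= b)%nat -> deg2_edge G (w m).
Proof. apply Hwalk. Qed.

Lemma cof_partner_walk m : (m < b)%nat -> cof G (J m) = cof G (w (S m)).
Proof. intros Hm. symmetry. apply Hwalk, Hm. Qed.

Lemma walk_succ_neq_partner m : (m < b)%nat -> w (S m) <> J m.
Proof. intros Hm. apply Hwalk, Hm. Qed.

Lemma cof_partner_walk_inj m m' : (a <= m < b)%nat -> (a <= m' < b)%nat ->
  cof G (J m) = cof G (J m') -> m = m'.
Proof.
  intros Hm Hm'. rewrite !cof_partner_walk by lia.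
  destruct (Nat.eq_dec (S m) b) as [Hb|Hb]; destruct (Nat.eq_dec (S m') b) as [Hb'|Hb'];
    try lia; [rewrite Hb, <- Hrep | rewrite Hb', <- Hrep |]; intros E;
    apply Hinj in E; lia.
Qed.

Lemma walk_neq_partner m m' : (a <= m < b)%nat -> (a <= m' < b)%nat -> w m <> J m'.
Proof.
  intros Hm Hm' E.
  assert (Hc : cof G (w m) = cof G (w (S m'))) by (rewrite E; apply cof_partner_walk; lia).
  destruct (Nat.eq_dec (S m') b) as [Hb|Hb].
  2:{ apply Hinj in Hc; try lia. subst m. apply (walk_succ_neq_partner m'); auto; lia. }
  rewrite Hb, <- Hrep in Hc. apply Hinj in Hc; try lia. subst m.
  destruct (partner_spec G (w m') (walk_edge m' ltac:(lia))) as [_ [Hv _]].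
  fold (J m') in Hv. rewrite <- E in Hv.
  destruct (partner_spec G (w a) (walk_edge a ltac:(lia))) as [_ [_ HJa]].
  destruct (deg2_edge_eq G (w a) (w m') (walk_edge a ltac:(lia))) as [E2|E2];
    [apply walk_edge; lia | symmetry; exact Hv | |].
  - assert (m' = a) by (apply Hinj; try lia; now rewrite E2). subst m'. exact (HJa (eq_sym E)).
  - destruct (Nat.eq_dec m' a) as [->|Hne]; [exact (HJa (eq_sym E))|].
    assert (Hc : cof G (w m') = cof G (w (S a)))
      by (rewrite E2; apply cof_partner_walk; lia).
    apply Hinj in Hc; try lia. subst m'. exact (walk_succ_neq_partner a Hab E2).
Qed.

Lemma vof_walk_inj m m' : (a <= m < b)%nat -> (a <= m' < b)%nat ->
  vof G (w m) = vof G (w m') -> m = m'.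
Proof.
  intros Hm Hm' Hv.
  destruct (deg2_edge_eq G (w m) (w m') (walk_edge m ltac:(lia))) as [E|E];
    [apply walk_edge; lia | symmetry; exact Hv | |].
  - apply Hinj; try lia. now rewrite E.
  - destruct (walk_neq_partner m' m); auto.
Qed.

(* The cycle alternates the check node of [w m], edge [w m], its variable node
   and the partner edge, for [a <= m < b], closing up since [w b] and [w a] share
   their check node. *)
Lemma deg2_walk_cycle : has_cycle_in_G2 G.
Proof.
  set (d := (b - a)%nat).
  set (E := interleave (fun q => w (a + q)%nat) (fun q => J (a + q)%nat)).
  set (U := interleave (fun q => CN (cof G (w (a + q)%nat)))
                       (fun q => VN (vof G (w (a + q)%nat)))).
  assert (HU : forall q, (q < d)%nat -> U ((2 * q + 2) mod (2 * d)) = CN (cof G (w (S (a + q))))).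
  { intros q Hq. destruct (Nat.eq_dec (S q) d) as [Hd|Hd].
    - replace (2 * q + 2)%nat with (2 * d)%nat by lia. rewrite Nat.Div0.mod_same.
      unfold U. rewrite (interleave_even _ _ 0), Nat.add_0_r, Hrep.
      do 3 f_equal. lia.
    - rewrite Nat.mod_small by lia. replace (2 * q + 2)%nat with (2 * S q)%nat by lia.
      unfold U. rewrite interleave_even. do 3 f_equal. lia. }
  exists (2 * d)%nat, (map E (seq 0 (2 * d))), (map U (seq 0 (2 * d))).
  split; [lia|]. split; [now rewrite length_map, length_seq|].
  split; [now rewrite length_map, length_seq|]. split; [|split].
  - apply NoDup_map_seq, injective_below_interleave.
    + intros q q' Hq Hq' Heq. enough (a + q = a + q')%nat by lia.
      apply Hinj; try lia. now rewrite Heq.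
    + intros q q' Hq Hq' Heq. enough (a + q = a + q')%nat by lia.
      apply cof_partner_walk_inj; try lia. now rewrite Heq.
    + intros q q' Hq Hq'. apply walk_neq_partner; lia.
  - apply NoDup_map_seq, injective_below_interleave.
    + intros q q' Hq Hq' Heq. injection Heq as Heq. enough (a + q = a + q')%nat by lia.
      apply Hinj; lia.
    + intros q q' Hq Hq' Heq. injection Heq as Heq. enough (a + q = a + q')%nat by lia.
      apply vof_walk_inj; lia.
    + discriminate.
  - intros j Hj. rewrite !nth_map_seq by (try apply Nat.mod_upper_bound; lia).
    destruct (even_or_odd_below j d Hj) as [[q [-> Hq]]|[q [-> Hq]]];
      unfold E; rewrite ?interleave_even, ?interleave_odd.
    + rewrite Nat.mod_small by lia. unfold U. rewrite interleave_even, interleave_odd.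
      destruct (walk_edge (a + q) ltac:(lia)) as [He Hd].
      repeat split; auto. right. split; reflexivity.
    + replace (2 * q + 1 + 1)%nat with (2 * q + 2)%nat by lia. rewrite HU by lia.
      unfold U. rewrite interleave_odd.
      pose proof (deg2_edge_partner G _ (walk_edge (a + q) ltac:(lia))) as [He Hd].
      destruct (partner_spec G (w (a + q)%nat) (walk_edge (a + q) ltac:(lia))) as [_ [Hv _]].
      repeat split; auto. left. split; [unfold J; now rewrite Hv|].
      now rewrite cof_partner_walk by lia.
Qed.

End Deg2WalkCycle.

Lemma no_long_deg2_walk G w : well_formed G -> ~ has_cycle_in_G2 G -> ~ deg2_walk G w (nchk G).
Proof.
  intros WF NC Hwalk.
  destruct (injective_below_or_first_repeat (fun m => cof G (w m)) (S (nchk G)))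
    as [Hinj | [a [b [Hab [Hrep Hinj]]]]].
  - assert (S (nchk G) <= nchk G)%nat; [|lia].
    apply (injective_below_bounded _ _ _ Hinj). intros p Hp.
    apply WF, (proj1 Hwalk); lia.
  - apply NC, (deg2_walk_cycle G w a b); try tauto.
    apply (deg2_walk_le G w (nchk G)); [lia | exact Hwalk].
Qed.

Section Squaring.

Variables (G : protograph) (eps : R).
Hypothesis WF : well_formed G.
Hypothesis Hdeg : forall v, (v < nvar G)%nat -> (2 <= var_deg G v)%nat.
Hypothesis Heps : 0 <= eps <= 1.

Let A := INR (nedges G).

Let A_ge_1 k : (k < nedges G)%nat -> 1 <= A.
Proof. intros Hk. apply (le_INR 1). lia. Qed.

Let de_x_deg3_le t s d k : (S t <= s)%nat -> 0 <= d -> (k < nedges G)%nat ->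
  (3 <= var_deg G (vof G k))%nat ->
  (forall j, (j < nedges G)%nat -> de_x G eps t j <= d) ->
  forall r, de_x G eps s k <= A ^ (r + 2) * (d * d).
Proof.
  intros Hs Hd Hk H3 Ht r.
  eapply Rle_trans; [apply (de_x_antitone G eps (S t)); auto|].
  eapply Rle_trans; [apply de_x_S_deg3; eauto|]. fold A.
  pose proof (A_ge_1 k Hk).
  assert (A ^ 2 <= A ^ (r + 2)) by (apply Rle_pow; lia || lra).
  replace (A * d * (A * d)) with (A ^ 2 * (d * d)) by ring.
  apply Rmult_le_compat_r; nra.
Qed.

(* Each step along a walk costs a factor |E|; where the walk cannot be continued
   the next edge sits at a node of degree >= 3, and there the bound is squared. *)
Lemma de_x_deg2_le r : forall t d i, 0 <= d ->
  (forall k, (k < nedges G)%nat -> de_x G eps t k <= d) ->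
  deg2_edge G i -> ~ (exists w, w 0%nat = i /\ deg2_walk G w r) ->
  de_x G eps (t + r + 1) i <= A ^ (r + 2) * (d * d).
Proof.
  induction r as [|r IH]; intros t d i Hd Ht Hi Hno.
  { exfalso. apply Hno. exists (fun _ => i). split; [reflexivity|].
    split; intros m Hm; [exact Hi | lia]. }
  replace (t + S r + 1)%nat with (S (t + r + 1)) by lia.
  eapply Rle_trans; [apply de_x_S_deg2; auto|].
  replace (A ^ (S r + 2)) with (A * A ^ (r + 2)) by (simpl; ring).
  rewrite Rmult_assoc. apply de_y_de_x_le; auto.
  { apply Rmult_le_pos; [apply pow_le; unfold A; apply pos_INR | nra]. }
  intros k Hk. apply In_Ec in Hk as [Hkn [Hkc Hkne]].
  pose proof (Hdeg (vof G k) (proj1 (WF k Hkn))) as Hk2.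
  destruct (Nat.eq_dec (var_deg G (vof G k)) 2) as [E2|E2].
  - apply IH; auto; [split; auto|]. intros [w [Hw0 Hwalk]]. apply Hno.
    eexists. split; [|eapply deg2_walk_cons; eauto]. reflexivity.
  - apply (de_x_deg3_le t); auto; lia.
Qed.

Lemma de_x_squaring : ~ has_cycle_in_G2 G ->
  forall t d, 0 <= d -> (forall k, (k < nedges G)%nat -> de_x G eps t k <= d) ->
  forall i, (i < nedges G)%nat ->
    de_x G eps (t + S (nchk G)) i <= A ^ (nchk G + 2) * (d * d).
Proof.
  intros NC t d Hd Ht i Hi.
  pose proof (Hdeg (vof G i) (proj1 (WF i Hi))) as Hi2.
  destruct (Nat.eq_dec (var_deg G (vof G i)) 2) as [E2|E2].
  - replace (t + S (nchk G))%nat with (t + nchk G + 1)%nat by lia.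
    apply de_x_deg2_le; auto; [split; auto|].
    intros [w [_ Hwalk]]. exact (no_long_deg2_walk G w WF NC Hwalk).
  - apply (de_x_deg3_le t); auto; lia.
Qed.

Lemma de_x_iterated_squaring : ~ has_cycle_in_G2 G ->
  forall t D, 0 <= D ->
  (forall k, (k < nedges G)%nat -> A ^ (nchk G + 2) * de_x G eps t k <= D) ->
  forall m k, (k < nedges G)%nat ->
    A ^ (nchk G + 2) * de_x G eps (t + m * S (nchk G)) k <= D ^ (2 ^ m).
Proof.
  intros NC t D HD Ht m. set (B := A ^ (nchk G + 2)).
  induction m as [|m IH]; intros k Hk.
  { rewrite Nat.mul_0_l, Nat.add_0_r, pow_1. apply Ht, Hk. }
  assert (HB : 0 < B) by (apply pow_lt; pose proof (A_ge_1 k Hk); lra).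
  replace (t + S m * S (nchk G))%nat with (t + m * S (nchk G) + S (nchk G))%nat by lia.
  assert (Hsq : D ^ (2 ^ S m) = D ^ (2 ^ m) * D ^ (2 ^ m))
    by (rewrite <- pow_add; f_equal; simpl; lia).
  replace (D ^ (2 ^ S m)) with (B * (B * (D ^ (2 ^ m) / B * (D ^ (2 ^ m) / B))))
    by (rewrite Hsq; field; lra).
  apply Rmult_le_compat_l; [lra|].
  apply de_x_squaring; auto.
  - apply Rmult_le_pos; [apply pow_le; exact HD | left; apply Rinv_0_lt_compat, HB].
  - intros j Hj. apply (Rmult_le_reg_l B); [exact HB|].
    replace (B * (D ^ (2 ^ m) / B)) with (D ^ (2 ^ m)) by (field; lra). apply IH, Hj.
Qed.

End Squaring.

Lemma exists_converging_above G eth eps : is_threshold G eth -> eps < eth ->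
  exists e, de_converges G e /\ eps < e.
Proof.
  intros [_ Hleast] Hlt. apply NNPP. intros Hno.
  assert (eth <= eps); [|lra]. apply Hleast. intros e He.
  apply Rnot_lt_le. intros Hlt'. apply Hno. eauto.
Qed.

Lemma antitone_eventually_le_uniform (x : nat -> nat -> R) n d :
  (forall t s k, (t <= s)%nat -> x s k <= x t k) ->
  (forall k, (k < n)%nat -> exists T, x T k <= d) ->
  exists T, forall k, (k < n)%nat -> x T k <= d.
Proof.
  intros Hx. induction n as [|n IH]; intros Hev; [exists 0%nat; intros; lia|].
  destruct IH as [T1 HT1]; [intros k Hk; apply Hev; lia|].
  destruct (Hev n ltac:(lia)) as [T2 HT2].
  exists (Nat.max T1 T2). intros k Hk.
  destruct (Nat.eq_dec k n) as [->|Hne].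
  - eapply Rle_trans; [apply Hx, Nat.le_max_r | exact HT2].
  - eapply Rle_trans; [apply Hx, Nat.le_max_l | apply HT1; lia].
Qed.

Lemma de_x_eventually_le G eth eps : is_threshold G eth -> 0 <= eps < eth ->
  forall d, 0 < d -> exists T, forall k, (k < nedges G)%nat -> de_x G eps T k <= d.
Proof.
  intros Hth Heps d Hd.
  destruct (exists_converging_above G eth eps Hth (proj2 Heps)) as [e [[He Hcv] Hlt]].
  apply antitone_eventually_le_uniform.
  { intros t s k. apply de_x_antitone. lra. }
  intros k Hk. destruct (Hcv k Hk d Hd) as [T HT]. exists T.
  specialize (HT T (le_n T)). unfold R_dist in HT. rewrite Rminus_0_r in HT.
  pose proof (Rle_abs (de_x G e T k)).
  pose proof (de_x_le_eps G eps e ltac:(lra) (proj2 He) T k). lra.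
Qed.

(* [alpha] and [beta] absorb [t1] and the last incomplete block. *)
Lemma half_pow_blocks_le (L t1 : nat) : (0 < L)%nat ->
  exists alpha beta, 0 < alpha /\ 0 < beta /\
    forall t, (t1 <= t)%nat ->
      (/ 2) ^ (2 ^ ((t - t1) / L)) <= exp (- beta * Rpower 2 (alpha * INR t)).
Proof.
  intros HL0. pose proof (lt_0_INR L HL0) as HL.
  assert (Hln : 0 < ln 2) by (rewrite <- ln_1; apply ln_increasing; lra).
  set (c := INR t1 / INR L + 1).
  exists (/ INR L), (ln 2 * Rpower 2 (- c)).
  split; [apply Rinv_0_lt_compat, HL|].
  split; [apply Rmult_lt_0_compat; [exact Hln | apply exp_pos]|].
  intros t Ht. set (m := ((t - t1) / L)%nat).
  assert (Hm : INR t - INR t1 < INR L * (INR m + 1)).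
  { rewrite <- minus_INR, <- S_INR, <- mult_INR by exact Ht. apply lt_INR.
    apply Nat.mul_succ_div_gt. lia. }
  assert (Hexp : - c + / INR L * INR t <= INR m).
  { unfold c. apply (Rmult_le_reg_l (INR L)); [exact HL|].
    replace (INR L * (- (INR t1 / INR L + 1) + / INR L * INR t))
      with (INR t - INR t1 - INR L) by (field; lra). lra. }
  rewrite <- Rpower_pow, pow_INR by lra. replace (INR 2) with 2 by reflexivity.
  rewrite <- (Rpower_pow m 2) by lra.
  unfold Rpower at 1. rewrite ln_Rinv by lra.
  replace (- (ln 2 * Rpower 2 (- c)) * Rpower 2 (/ INR L * INR t))
    with (Rpower 2 (- c + / INR L * INR t) * - ln 2) by (rewrite Rpower_plus; ring).
  assert (Hle : Rpower 2 (- c + / INR L * INR t) <= Rpower 2 (INR m))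
    by (apply Rle_Rpower; lra).
  destruct (Rle_lt_or_eq_dec _ _ Hle) as [Hlt|Heq].
  - left. apply exp_increasing. nra.
  - rewrite Heq. right. f_equal.
Qed.

Lemma threshold_le_1 G eth : is_threshold G eth -> eth <= 1.
Proof. intros [_ Hleast]. apply Hleast. intros e He. apply He. Qed.

Theorem theorem1 (G : protograph) :
  well_formed G ->
  (forall v, (v < nvar G)%nat -> (2 <= var_deg G v)%nat) ->
  ~ has_cycle_in_G2 G ->
  (forall v, (v < nvar G)%nat -> var_deg G v = 2%nat ->
     exists w, (w < nvar G)%nat /\ (3 <= var_deg G w)%nat /\ path_in_G G (VN v) (VN w)) ->
  forall eth : R, is_threshold G eth ->
  forall eps : R, 0 <= eps < eth ->
  exists (alpha beta K : R) (t0 : nat),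
    0 < alpha /\ 0 < beta /\ 0 < K /\
    forall i t, (i < nedges G)%nat -> (t0 <= t)%nat ->
      de_x G eps t i <= K * exp (- beta * Rpower 2 (alpha * INR t)).
Proof.
  intros WF Hdeg NC _ eth Hth eps Heps.
  destruct (Nat.eq_dec (nedges G) 0) as [H0|Hn].
  { exists 1, 1, 1, 0%nat. repeat split; try lra. intros i t Hi. lia. }
  assert (He : 0 <= eps <= 1) by (pose proof (threshold_le_1 G eth Hth); lra).
  set (L := S (nchk G)). set (B := INR (nedges G) ^ (nchk G + 2)).
  assert (HB : 1 <= B) by (apply pow_R1_Rle, (le_INR 1); lia).
  destruct (de_x_eventually_le G eth eps Hth Heps (/ (2 * B))) as [t1 Ht1].
  { apply Rinv_0_lt_compat. lra. }
  destruct (half_pow_blocks_le L t1) as [alpha [beta [Ha [Hb Hdecay]]]]; [lia|].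
  exists alpha, beta, (/ B), t1.
  split; [exact Ha|]. split; [exact Hb|]. split; [apply Rinv_0_lt_compat; lra|].
  intros i t Hi Ht. set (m := ((t - t1) / L)%nat).
  apply (Rmult_le_reg_l B); [lra|]. rewrite <- Rmult_assoc, Rinv_r, Rmult_1_l by lra.
  apply Rle_trans with (B * de_x G eps (t1 + m * L) i).
  { apply Rmult_le_compat_l; [lra|]. apply de_x_antitone; [exact He|].
    pose proof (Nat.Div0.mul_div_le (t - t1) L). unfold m. lia. }
  eapply Rle_trans; [apply (de_x_iterated_squaring G eps WF Hdeg He NC t1 (/ 2)); auto|].
  - lra.
  - intros k Hk. specialize (Ht1 k Hk).
    apply (Rmult_le_compat_l B) in Ht1; [|lra].
    replace (B * / (2 * B)) with (/ 2) in Ht1 by (field; lra). exact Ht1.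
  - apply Hdecay, Ht.
Qed.
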